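(* Let $Y$ be a spectrally positive Lévy process and let $X$ be the process controlled by the control band policy with parameters $a<\alpha\le\beta<b$, with stopping times $\tau^*_n$ as in the context. Let $n^*_\alpha=\inf\{n\ge1:X(\tau^*_n)=\alpha\}$. Then $E_\alpha[\tau^*_{n^*_\alpha}]<\infty$.
   Context: $Y$ is a Lévy process with $Y_0=x$ under $P_x$ (expectation $E_x$), Lévy measure $\nu$ with $\int_{\{|y|\ge1\}}|y|\nu(dy)<\infty$; spectrally positive means $\nu((-\infty,0))=0$ and $Y$ is not a subordinator. The control band policy with parameters $a<\alpha\le\beta<b$: $\tau^*_0=0$, $\tau^*_1=\inf\{t\ge0:X_{t-}+\Delta Y_t\notin(a,b)\}$, $\tau^*_n=\inf\{t>\tau^*_{n-1}:X_{t-}+\Delta Y_t\notin(a,b)\}$ for $n\ge2$ (with $X_{0-}=x$, $\Delta Y_0=0$); at $\tau^*_n$ the controlled process jumps to $\beta$ if $X_{\tau^*_n-}+\Delta Y_{\tau^*_n}\ge b$ and to $\alpha$ if $X_{\tau^*_n-}+\Delta Y_{\tau^*_n}\le a$; between interventions $X$ moves as $Y$ (i.e. $X_t=Y_t+\sum_i 1_{\{\tau^*_i\le t\}}\xi^*_i$ with $\xi^*_i$ the intervention sizes). *)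

From HB Require Import structures.
From mathcomp Require Import all_boot all_order all_algebra.
From mathcomp Require Import all_classical all_reals all_analysis.
Set Implicit Arguments. Unset Strict Implicit. Unset Printing Implicit Defensive.
Import Order.TTheory GRing.Theory Num.Theory.
Import numFieldNormedType.Exports.
Local Open Scope classical_set_scope.
Local Open Scope ring_scope.

Section Levy.
Context {R : realType} {d : measure_display} {T : measurableType d}.

(* Time is nonnegative real; values of a path at negative times are never used. *)

Definition cadlag_path (f : R -> R) : Prop :=
  (forall t, 0 <= t -> f @ t^'+ --> f t) /\
  (forall t, 0 < t -> cvg (f @ t^'-)).

(* Jump of a path at time t; by convention Delta f 0 = 0. *)
Definition jump (f : R -> R) (t : R) : R :=
  if t <= 0 then 0 else f t - lim (f @ t^'-).

(* Levy process started at 0 (the law under P_x is that of x + Y). *)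
Definition is_levy (P : probability T R) (Y : R -> T -> R) : Prop :=
  [/\ (forall t, measurable_fun setT (Y t)),
      (forall w, Y 0 w = 0),
      (forall w, cadlag_path (Y ^~ w)),
      (forall s t (B : set R), 0 <= s -> 0 <= t -> measurable B ->
         P [set w | B (Y (s + t) w - Y s w)] = P [set w | B (Y t w)]) &
      (forall (n : nat) (tt : nat -> R) (B : nat -> set R),
         0 <= tt 0%N -> (forall i, tt i <= tt i.+1) ->
         (forall i, measurable (B i)) ->
         P (\bigcap_(i in [set i | (i < n)%N])
              [set w | B i (Y (tt i.+1) w - Y (tt i) w)])
         = (\prod_(i < n) P [set w | B i (Y (tt i.+1) w - Y (tt i) w)%R])%E)].

Definition jump_times (f : R -> R) (A : set R) : set R :=
  [set t | 0 < t <= 1 /\ jump f t != 0 /\ A (jump f t)].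

(* Levy measure = intensity of the jump measure:
   nu(A) = E[ #{ t in (0,1] : Delta Y_t <> 0, Delta Y_t in A } ]. *)
Definition levy_measure (P : probability T R) (Y : R -> T -> R) (A : set R)
  : \bar R :=
  \int[P]_w (\esum_(t in jump_times (Y ^~ w) A) 1%E).

(* \int_{|y| >= 1} |y| nu(dy) < oo, with nu the jump intensity measure above,
   i.e. E[ sum_{t in (0,1], |Delta Y_t| >= 1} |Delta Y_t| ] < oo. *)
Definition levy_tail_moment_finite (P : probability T R) (Y : R -> T -> R)
  : Prop :=
  (\int[P]_w (\esum_(t in jump_times (Y ^~ w) [set y : R | (1 <= `|y|)%R])
                 (`|jump (Y ^~ w) t|)%:E) < +oo)%E.

Definition subordinator (P : probability T R) (Y : R -> T -> R) : Prop :=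
  is_levy P Y /\
  {ae P, forall w, forall s t, 0 <= s -> s <= t -> Y s w <= Y t w}.

Definition spectrally_positive (P : probability T R) (Y : R -> T -> R)
  : Prop :=
  levy_measure P Y `]-oo, 0[ = 0%E /\ ~ subordinator P Y.

End Levy.

Section Band.
Context {R : realType}.

(* First time t (t > s if strict, t >= s otherwise) at which
   X_{t-} + Delta Y_t = p + f t - f s leaves (a, b); +oo if never. *)
Definition exit_time (f : R -> R) (a b p s : R) (strict : bool) : \bar R :=
  ereal_inf [set t%:E | t in [set t | (if strict then s < t else s <= t)
                                      /\ ~ (a < p + f t - f s < b)]].

(* band_state f a alpha beta b x n = (tau*_n, X(tau*_n)) for the control band
   policy driven by the path Y_t = x + f t (f 0 = 0), X_{0-} = x. *)
Fixpoint band_state (f : R -> R) (a alpha beta b x : R) (n : nat)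
  : \bar R * R :=
  match n with
  | 0%N => (0%:E, x)
  | m.+1 =>
    let: (tau, p) := band_state f a alpha beta b x m in
    match tau with
    | r%:E =>
      let tau' := exit_time f a b p r (m != 0%N) in
      (tau', match tau' with
             | r'%:E => if b <= p + f r' - f r then beta else alpha
             | _ => p
             end)
    | _ => (+oo%E, p)
    end
  end.

Definition band_tau f a alpha beta b x n := (band_state f a alpha beta b x n).1.
Definition band_pos f a alpha beta b x n := (band_state f a alpha beta b x n).2.

(* tau*_{n*_alpha} with n*_alpha = inf{n >= 1 : X(tau*_n) = alpha}
   (+oo if there is no such n). Since n |-> tau*_n is nondecreasing,
   the infimum below equals tau*_{n*_alpha}. *)
Definition tau_at_nstar (f : R -> R) (a alpha beta b x : R) : \bar R :=
  ereal_inf [set band_tau f a alpha beta b x n | n in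
     [set n : nat | (1 <= n)%N /\ band_tau f a alpha beta b x n < +oo /\
              band_pos f a alpha beta b x n = alpha]]%E.

End Band.

From HB Require Import structures.
From mathcomp Require Import all_boot all_order all_algebra.
From mathcomp Require Import all_classical all_reals all_analysis.
From mathcomp Require Import lra measurable_realfun.
Import Order.TTheory GRing.Theory Num.Theory.
Import numFieldNormedType.Exports.
Local Open Scope classical_set_scope.
Local Open Scope ring_scope.

(* If the driving path falls by at least b - a over a window [s, t], the
   controlled process is sent back to alpha by time t: otherwise every
   intervention up to t is an exit through b, each needing a rise of at least
   b - beta, and these would accumulate in [0, t] against the existence of left
   limits.  A Levy process that is not a subordinator falls below a - b over
   some time h with probability 1 - q > 0.  Cutting time into blocks of length
   h, independence and stationarity of the increments make the number of blocks
   before the first such fall geometric, so tau*_{n*_alpha} is at most h times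
   a geometric variable of mean 1 / (1 - q). *)

Lemma left_limits_no_uniform_jumps {R : realType} (g : R -> R) (u : nat -> R)
    (e t : R) :
  (forall x, 0 < x -> cvg (g @ x^'-)) -> 0 < e ->
  (forall n, 0 <= u n <= t) -> (forall n, u n <= u n.+1) ->
  ~ (forall n, e <= g (u n.+1) - g (u n)).
Proof.
move=> gl e0 ut /nondecreasing_seqP u_nd ujump.
have u_lt n : u n < u n.+1.
  rewrite lt_neqAle u_nd // andbT; apply/eqP => en.
  by have := ujump n; rewrite en subrr; lra.
have u_sup : has_sup (range u).
  split; first by exists (u 0%N), 0%N.
  by exists t => _ [n _ <-]; case/andP: (ut n).
pose l := sup (range u).
have u_lt_l n : u n < l.
  by apply: lt_le_trans (u_lt n) _; apply: sup_upper_bound => //; exists n.+1.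
have l0 : 0 < l by apply: le_lt_trans (u_lt_l 0%N); case/andP: (ut 0%N).
have e20 : 0 < e / 2 by lra.
have /cvgrPdist_lt/(_ _ e20) := gl l l0.
rewrite /within => /nbhs_ballP [r /= r0 near_l].
have [_ [n _ <-] unl] := sup_adherent r0 u_sup.
have close k : (n <= k)%N -> `|lim (g @ l^'-) - g (u k)| < e / 2.
  move=> nk; apply: near_l; last exact: u_lt_l.
  rewrite /ball /= ger0_norm ?subr_ge0 ?(ltW (u_lt_l k)) //.
  have := u_nd _ _ nk; rewrite -/l in unl; lra.
have := ujump n; have := close n (leqnn n); have := close n.+1 (leqnSn n).
rewrite !ltr_norml; lra.
Qed.

Section band_path.
Context {R : realType}.
Variables (f : R -> R) (a alpha beta b : R).

Lemma exit_time_le p s t (strict : bool) :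
  (if strict then s < t else s <= t) -> ~~ (a < p + f t - f s < b) ->
  (exit_time f a b p s strict <= t%:E)%E.
Proof. by move=> st /negP out; apply: ereal_inf_lbound; exists t. Qed.

Lemma exit_time_ge p s (strict : bool) : (s%:E <= exit_time f a b p s strict)%E.
Proof.
apply: le_ereal_inf_tmp => _ [t [st _] <-]; rewrite lee_fin.
by case: strict st => // /ltW.
Qed.

Lemma lt_exit_time_in_band p s t (strict : bool) :
  (if strict then s < t else s <= t) -> (t%:E < exit_time f a b p s strict)%E ->
  a < p + f t - f s < b.
Proof.
move=> st; apply: contraTT => out.
by rewrite -leNgt; exact: exit_time_le.
Qed.

Lemma band_tau_ge0 x n : (0 <= band_tau f a alpha beta b x n)%E.
Proof.
elim: n => [|n IH]; rewrite /band_tau //=.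
move: IH; rewrite /band_tau; case: (band_state _ _ _ _ _ _ n) => [[r||] p] //=.
by move=> r0; apply: le_trans r0 (exit_time_ge _ _ _).
Qed.

Lemma tau_at_nstar_ge0 x : (0 <= tau_at_nstar f a alpha beta b x)%E.
Proof. by apply: le_ereal_inf_tmp => _ [n _ <-]; exact: band_tau_ge0. Qed.

Lemma band_tauS x n r : band_tau f a alpha beta b x n = r%:E ->
  band_tau f a alpha beta b x n.+1 =
  exit_time f a b (band_pos f a alpha beta b x n) r (n != 0%N).
Proof.
rewrite /band_tau /band_pos /=.
by case: (band_state _ _ _ _ _ _ n) => tau p /= ->.
Qed.

Lemma band_posS x n r r' : band_tau f a alpha beta b x n = r%:E ->
  band_tau f a alpha beta b x n.+1 = r'%:E ->
  band_pos f a alpha beta b x n.+1 =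
  if b <= band_pos f a alpha beta b x n + f r' - f r then beta else alpha.
Proof.
rewrite /band_tau /band_pos /=.
by case: (band_state _ _ _ _ _ _ n) => tau p /= -> /= ->.
Qed.

End band_path.

Arguments exit_time_le {R f a b p s t strict}.
Arguments lt_exit_time_in_band {R f a b p s t strict}.
Arguments band_tauS {R f a alpha beta b x n r}.
Arguments band_posS {R f a alpha beta b x n r r'}.

Section band_drop.
Context {R : realType}.
Variables (f : R -> R) (a alpha beta b s t : R).

Let tau := band_tau f a alpha beta b alpha.
Let pos := band_pos f a alpha beta b alpha.

(* [pos n + f t - f r] is where the process would be at time t if no
   intervention followed the n-th one, made at time r. *)
Let band_invariant n r := [/\ tau n = r%:E, 0 <= r <= t,
  r <= s \/ pos n + f t - f r < a, a < pos n & pos n <= beta].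

Section no_return.
Hypothesis no_return :
  forall n, (1 <= n)%N -> (tau n <= t%:E)%E -> pos n != alpha.

Lemma next_exit_le {n r} : beta < b -> s < t -> f t - f s <= a - b ->
  band_invariant n r -> exists r',
  [/\ tau n.+1 = r'%:E, r <= r' <= t & r' <= s \/ pos n + f t - f r < a].
Proof.
move=> beta_b st drop [taun /andP[r0 rt] side apn pnb].
have tauS : tau n.+1 = exit_time f a b (pos n) r (n != 0%N) by exact: band_tauS.
have adm u : r < u -> if n != 0%N then r < u else r <= u.
  by case: (n != 0%N) => // /ltW.
have r_le : (r%:E <= tau n.+1)%E by rewrite tauS; exact: exit_time_ge.
have [le_s|gt_s] := leP (tau n.+1) s%:E.
  case E: (tau n.+1) le_s r_le => [r'||] //; rewrite !lee_fin => r's rr'.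
  by exists r'; split => //; [apply/andP; split; lra | left].
have below : pos n + f t - f r < a.
  case: side => // rs.
  suff : pos n + f s - f r < b by lra.
  have [<-|rns] := eqVneq r s; first by rewrite addrK; lra.
  have rlts : r < s by rewrite lt_neqAle rns.
  by rewrite tauS in gt_s; case/andP: (lt_exit_time_in_band (adm _ rlts) gt_s).
have rlt : r < t.
  rewrite lt_neqAle rt andbT.
  by apply: contraTneq below => ->; rewrite addrK; lra.
have le_t : (tau n.+1 <= t%:E)%E.
  by rewrite tauS; apply: exit_time_le (adm _ rlt) _; apply/negP => /andP[]; lra.
case E: (tau n.+1) le_t r_le => [r'||] //; rewrite !lee_fin => r't rr'.
by exists r'; split => //; [apply/andP; split | right].
Qed.

Lemma next_exit_up {n r r'} : tau n = r%:E -> tau n.+1 = r'%:E -> r' <= t ->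
  pos n.+1 = beta /\ b <= pos n + f r' - f r.
Proof.
move=> taun tauS r't; have := band_posS taun tauS; rewrite -/pos.
case: leP => // _ posS.
by have := no_return n.+1 isT; rewrite tauS lee_fin r't posS eqxx => /(_ isT).
Qed.

Lemma band_invariantS {n r} : beta < b -> s < t -> f t - f s <= a - b ->
  band_invariant n r ->
  exists r', [/\ band_invariant n.+1 r', r <= r' & b - beta <= f r' - f r].
Proof.
move=> beta_b st drop inv; have [taun /andP[r0 _] _ apn pnb] := inv.
have [r' [tauS /andP[rr' r't] side]] := next_exit_le beta_b st drop inv.
have [posS up] := next_exit_up taun tauS r't.
exists r'; split => //; last by lra.
split; rewrite ?posS //; [apply/andP; split; lra | | lra].
by case: side; [left | right; lra].
Qed.

End no_return.

Lemma tau_at_nstar_le_drop : cadlag_path f ->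
  a < alpha -> alpha <= beta -> beta < b ->
  0 <= s -> s < t -> f t - f s <= a - b ->
  (tau_at_nstar f a alpha beta b alpha <= t%:E)%E.
Proof.
move=> [_ f_left] a_alpha alpha_beta beta_b s0 st drop.
rewrite leNgt; apply/negP => t_lt.
have no_return n : (1 <= n)%N -> (tau n <= t%:E)%E -> pos n != alpha.
  move=> n1 le_t; apply/eqP => posn.
  suff : (tau_at_nstar f a alpha beta b alpha <= tau n)%E.
    by move/le_trans/(_ le_t); rewrite leNgt t_lt.
  by apply: ereal_inf_lbound; exists n => //; split => //; split => //;
    apply: le_lt_trans le_t (ltry _).
have invS n r := @band_invariantS no_return n r beta_b st drop.
have inv n : band_invariant n (fine (tau n)).
  elim: n => [|n /invS [r' [inv' _ _]]].
    by split => //=; [apply/andP; split; lra | left].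
  by case: inv' => E *; rewrite E.
apply: (@left_limits_no_uniform_jumps _ f (fine \o tau) (b - beta) t f_left)
  => [||n|n].
- by rewrite subr_gt0.
- by move=> n; case: (inv n).
- by have [r' [[E _ _ _ _] rr' _]] := invS _ _ (inv n); rewrite /= E.
- by have [r' [[E _ _ _ _] _ jump]] := invS _ _ (inv n); rewrite /= E.
Qed.

End band_drop.

Section right_continuous_path.
Context {R : realType}.

Lemma right_cvg_le_rat {g : R -> R} {x z c : R} : x < z -> g @ x^'+ --> g x ->
  (forall q : rat, x < ratr q < z -> g (ratr q) <= c) -> g x <= c.
Proof.
move=> xz gx gq; rewrite leNgt; apply/negP => cg.
have e0 : 0 < g x - c by rewrite subr_gt0.
have /cvgrPdist_lt/(_ _ e0) := gx.
rewrite /within => /nbhs_ballP [e /= e_gt0 near_x].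
have xm : x < Order.min (x + e) z by rewrite lt_min xz andbT ltrDl.
have [q] := rat_in_itvoo xm; rewrite in_itv /= lt_min => /andP[xq /andP[qe qz]].
have := gq q; rewrite xq qz => /(_ isT) gqc.
have := near_x (ratr q); rewrite /ball /= ltr0_norm ?subr_lt0 // => /(_ _ xq).
by rewrite ltr_norml; lra.
Qed.

Lemma cadlag_nondecreasing_rat (g : R -> R) : cadlag_path g ->
  (forall q1 q2 : rat, 0 <= (ratr q1 : R) -> (ratr q1 : R) <= ratr q2 ->
     g (ratr q1) <= g (ratr q2)) ->
  forall s t, 0 <= s -> s <= t -> g s <= g t.
Proof.
move=> [g_right _] gq s t s0 st.
have le_rat q : s < ratr q -> g s <= g (ratr q).
  move=> sq; apply: (right_cvg_le_rat sq (g_right _ s0)) => q' /andP[sq' q'q].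
  by apply: gq; lra.
have t1 : t < t + 1 by lra.
have gt_right : (fun y => - g y) @ t^'+ --> - g t.
  by apply: cvgN; exact: g_right (le_trans s0 st).
rewrite -lerN2; apply: (right_cvg_le_rat t1 gt_right) => q /andP[tq _].
by rewrite lerN2; apply: le_rat; lra.
Qed.

End right_continuous_path.

Section indicator_series.
Context {R : realType} {T : Type}.
Variables (C : nat -> set T) (h : R) (w : T).

Lemma nneseries_indic_ge N : 0 <= h -> (forall n, (n < N)%N -> C n w) ->
  ((N%:R * h)%:E <= \sum_(n <oo) (h * \1_(C n) w)%:E)%E.
Proof.
move=> h0 CN.
have term0 n : (0 <= (h * \1_(C n) w)%:E)%E.
  by rewrite lee_fin mulr_ge0 // indicE ler0n.
apply: le_trans (nneseries_lim_ge N (fun n _ _ => term0 n)).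
rewrite sumEFin lee_fin (@eq_big_nat _ _ _ 0%N N _ (fun=> h)).
  by rewrite sumr_const_nat subn0 mulr_natl.
by move=> n /andP[_ nN]; rewrite indicE mem_set ?mulr1 //; exact: CN.
Qed.

Lemma nneseries_indic_pinfty : 0 < h -> (forall n, C n w) ->
  (\sum_(n <oo) (h * \1_(C n) w)%:E = +oo)%E.
Proof.
move=> h0 C_all; apply/eqyP => A A0.
have := nneseries_indic_ge (Num.truncn (A / h)).+1 (ltW h0) (fun n _ => C_all n).
by apply: le_trans; rewrite lee_fin -ler_pdivrMr // ltW // truncnS_gt.
Qed.

End indicator_series.

Lemma nneseries_geometric {R : realType} (h q : R) : 0 <= q < 1 ->
  (\sum_(n <oo) (h * q ^+ n)%:E = (h / (1 - q))%:E)%E.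
Proof.
move=> /andP[q0 q1]; have q_lt1 : `|q| < 1 by rewrite ger0_norm.
rewrite -(cvg_lim _ (cvg_geometric_series (a := h) q_lt1)) // -EFin_lim.
  by apply: congr_lim; apply/funext => n; rewrite /series /= -sumEFin.
exact: is_cvg_geometric_series q_lt1.
Qed.

Section measure_facts.
Context {R : realType} {d : measure_display} {T : measurableType d}.

Lemma measurable_preimageT {g : T -> R} {B : set R} :
  measurable_fun setT g -> measurable B -> measurable (g @^-1` B).
Proof. by move=> mg mB; rewrite -[_ @^-1` _]setTI; exact: mg. Qed.

Lemma measurable_lt_preimageT {g : T -> R} c :
  measurable_fun setT g -> measurable [set w | g w < c].
Proof.
by move=> mg; exact: measurable_preimageT mg (open_measurable (@open_lt _ c)).
Qed.

Lemma measure_lt0_eq0 (mu : {measure set T -> \bar R}) (g : T -> R) :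
  measurable_fun setT g ->
  (forall e, 0 < e -> mu [set w | g w < - e] = 0%E) ->
  mu [set w | g w < 0] = 0%E.
Proof.
move=> mg ge.
have -> : [set w | g w < 0] = \bigcup_n [set w | g w < - n.+1%:R^-1].
  apply/seteqP; split => w /=.
  - by move=> /ltr_add_invr [k hk]; exists k => //=; rewrite -subr_lt0 opprK.
  - by move=> [n _ /= h]; apply: lt_trans h _; rewrite oppr_lt0 invr_gt0.
apply/negligibleP.
  by apply: bigcup_measurable => n _; exact: measurable_lt_preimageT.
apply: negligible_bigcup => n.
by apply/negligibleP; [exact: measurable_lt_preimageT | exact: ge].
Qed.

(* The integrand of the theorem is not known to be measurable; the integral of
   a nonnegative function is a supremum over the simple functions below it, so
   it is monotone anyway. *)
Lemma ge0_le_integral_nonmeasurable (mu : {measure set T -> \bar R})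
    (f g : T -> \bar R) :
  (forall x, (0 <= f x)%E) -> (forall x, (f x <= g x)%E) ->
  (\int[mu]_x f x <= \int[mu]_x g x)%E.
Proof.
move=> f0 fg; have g0 x := le_trans (f0 x) (fg x).
rewrite !ge0_integralTE //; apply: le_ereal_sup => _ [s sf <-].
by exists s => // x; exact: le_trans (sf x) (fg x).
Qed.

End measure_facts.

Section levy_process.
Context {R : realType} {d : measure_display} {T : measurableType d}.
Variables (P : probability T R) (Y : R -> T -> R).

Lemma levy_nonneg_subordinator : is_levy P Y ->
  (forall t, 0 <= t -> P [set w | Y t w < 0] = 0%E) -> subordinator P Y.
Proof.
move=> hl Y_nonneg; split => //; case: hl => mY _ Y_cadlag stY _.
pose D (qq : rat * rat) : set T :=
  if (0 <= (ratr qq.1 : R)) && ((ratr qq.1 : R) <= ratr qq.2) then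
    [set w | Y (ratr qq.2) w - Y (ratr qq.1) w < 0] else set0.
have D_null qq : P.-negligible (D qq).
  rewrite /D; case: ifP => [/andP[q10 q12]|_]; last exact: negligible_set0.
  have q0 : 0 <= (ratr qq.2 : R) - ratr qq.1 by rewrite subr_ge0.
  have := stY _ _ _ q10 q0 (open_measurable (@open_lt _ 0)); rewrite subrKC => E.
  apply/negligibleP; last exact: etrans E (Y_nonneg _ q0).
  by apply: measurable_lt_preimageT; apply: measurable_funB; exact: mY.
have null : P.-negligible (\bigcup_k
    if @pickle_inv (rat * rat)%type k is Some qq then D qq else set0).
  apply: negligible_bigcup => k.
  by case: pickle_inv => [qq|]; [exact: D_null | exact: negligible_set0].
apply: negligibleS null => w /= not_mono; apply: contrapT => not_D.
apply: not_mono; apply: cadlag_nondecreasing_rat (Y_cadlag w) _ => q1 q2 q10 q12.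
rewrite leNgt; apply/negP => lt21; apply: not_D.
exists (pickle (q1, q2)); first by [].
rewrite pickleK_inv /D [(q1, q2).1]/= [(q1, q2).2]/= q10 q12.
by rewrite -subr_lt0 in lt21.
Qed.

Lemma levy_neg_increment : is_levy P Y -> ~ subordinator P Y ->
  exists t e, [/\ 0 < t, 0 < e & (0 < P [set w | (Y t w < - e)%R])%E].
Proof.
move=> hl not_sub; apply: contrapT => no_neg.
apply/not_sub/(levy_nonneg_subordinator hl) => t t0.
have [mY Y0 _ _ _] := hl.
apply: measure_lt0_eq0 (mY t) _ => e e0.
have [->|tn0] := eqVneq t 0.
  rewrite (_ : [set w | Y 0 w < - e] = set0) ?measure0 //.
  by apply/seteqP; split => w //=; rewrite Y0 oppr_gt0 ltNge (ltW e0).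
apply/eqP; rewrite eq_le measure_ge0 andbT leNgt; apply/negP => Ppos.
by apply: no_neg; exists t, e; split => //; rewrite lt_neqAle eq_sym tn0.
Qed.

Definition block_increments_in (h : R) (B : set R) (n : nat) : set T :=
  \bigcap_(k in [set k | (k < n)%N])
    [set w | B (Y (k.+1%:R * h) w - Y (k%:R * h) w)].

Lemma measurable_block_increments_in h B n :
  (forall t, measurable_fun setT (Y t)) -> measurable B ->
  measurable (block_increments_in h B n).
Proof.
move=> mY mB; apply: bigcap_measurableType => k _.
apply: (@measurable_preimageT _ _ _ (fun w => Y (k.+1%:R * h) w - Y (k%:R * h) w))
  => //.
by apply: measurable_funB; exact: mY.
Qed.

Lemma block_increments_in_prob h B n : is_levy P Y -> 0 <= h -> measurable B ->
  P (block_increments_in h B n) = (\prod_(k < n) P [set w | B (Y h w)])%E.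
Proof.
case=> _ _ _ stY indY h0 mB.
rewrite /block_increments_in (indY n (fun k => k%:R * h) (fun=> B)) ?mul0r //.
  apply: eq_bigr => k _; rewrite -natr1 mulrDl mul1r.
  by apply: stY => //; rewrite mulr_ge0.
by move=> k; rewrite ler_wpM2r // ler_nat.
Qed.

Lemma block_increments_below {h e n w} : Y 0 w = 0 ->
  block_increments_in h [set x | x < - e] n w -> Y (n%:R * h) w <= - (n%:R * e).
Proof.
move=> Y0 blocks; suff le_k k : (k <= n)%N -> Y (k%:R * h) w <= - (k%:R * e).
  exact: le_k.
elim: k => [_|k IH kn]; first by rewrite !mul0r Y0 oppr0.
have := blocks k kn; have := IH (ltnW kn); rewrite /= -natr1 !mulrDl !mul1r; lra.
Qed.

Lemma levy_large_drop c : is_levy P Y -> ~ subordinator P Y ->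
  exists h, 0 < h /\ (0 < P [set w | (Y h w <= c)%R])%E.
Proof.
move=> hl not_sub; have [t [e [t0 e0 pe]]] := levy_neg_increment hl not_sub.
have [mY Y0 _ _ _] := hl.
pose m := (Num.truncn (- c / e)).+1.
exists (m%:R * t); split; first by rewrite mulr_gt0.
have ce : - c < m%:R * e by rewrite -ltr_pdivrMr //; exact: truncnS_gt.
have mB : measurable [set x : R | x < - e] := open_measurable (@open_lt _ _).
apply: (@lt_le_trans _ _ (P (block_increments_in t [set x | x < - e] m))).
  rewrite block_increments_in_prob ?(ltW t0) //.
  by elim/big_ind: _ => // x y; exact: mule_gt0.
apply: le_measure; rewrite ?inE.
- exact: measurable_block_increments_in.
- exact: measurable_preimageT (mY _) (closed_measurable (@closed_le _ _)).
- by move=> w /(block_increments_below (Y0 w)) /=; lra.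
Qed.

Lemma integral_block_series_lt_pinfty {h c} : is_levy P Y -> 0 < h ->
  (0 < P [set w | (Y h w <= c)%R])%E ->
  (\int[P]_w \sum_(n <oo) (h * \1_(block_increments_in h [set x | c < x] n) w)%:E
     < +oo)%E.
Proof.
move=> hl h0 Pdrop; have [mY _ _ _ _] := hl.
set C := block_increments_in h _.
have mB : measurable [set x : R | c < x] := open_measurable (@open_gt _ _).
have mC n : measurable (C n) := measurable_block_increments_in h _ n mY mB.
have mdrop : measurable [set w | Y h w <= c].
  exact: measurable_preimageT (mY h) (closed_measurable (@closed_le _ _)).
pose p := fine (P [set w | Y h w <= c]).
have Pp : P [set w | Y h w <= c] = p%:E by rewrite fineK // fin_num_measure.
have [p0 p1] : 0 < p /\ p <= 1.
  by rewrite -!lee_fin -lte_fin -Pp probability_le1.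
have Pq : P [set w | c < Y h w] = (1 - p)%:E.
  rewrite (_ : [set w | c < Y h w] = ~` [set w | Y h w <= c]).
    by rewrite probability_setC // Pp EFinB.
  by apply/seteqP; split => w /=; rewrite ltNge => /negP.
have PC n : P (C n) = ((1 - p) ^+ n)%:E.
  rewrite block_increments_in_prob ?(ltW h0) // (eq_bigr (fun=> (1 - p)%:E)).
    by rewrite prodEFin prodr_const card_ord.
  by move=> k _; exact: Pq.
have Ig n : (\int[P]_w (h * \1_(C n) w)%:E = (h * (1 - p) ^+ n)%:E)%E.
  under eq_integral => x _ do rewrite EFinM.
  rewrite ge0_integralZl_EFin ?(ltW h0) //; last first.
    by apply/measurable_EFinP; exact: measurable_indic.
  by rewrite integral_indic // setIT EFinM; congr (_ * _)%E; exact: PC.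
rewrite integral_nneseries //; first last.
- by move=> n w _; rewrite lee_fin mulr_ge0 ?(ltW h0) // indicE ler0n.
- by move=> n; apply/measurable_EFinP; apply: measurable_funM.
rewrite (eq_eseriesr (fun n _ => Ig n)) nneseries_geometric ?ltry //.
by apply/andP; split; lra.
Qed.

Lemma tau_at_nstar_le_block_series a alpha beta b h w :
  cadlag_path (Y ^~ w) -> a < alpha -> alpha <= beta -> beta < b -> 0 < h ->
  (tau_at_nstar (Y ^~ w) a alpha beta b alpha <=
   \sum_(n <oo) (h * \1_(block_increments_in h [set x | a - b < x] n) w)%:E)%E.
Proof.
move=> Y_cadlag a_alpha alpha_beta beta_b h0.
have [ex_drop|no_drop] :=
  pselect (exists k, Y (k.+1%:R * h) w - Y (k%:R * h) w <= a - b).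
- case: (ex_minnP ex_drop) => K drop_K K_min.
  apply: le_trans (@tau_at_nstar_le_drop _ (Y ^~ w) a alpha beta b (K%:R * h)
    (K.+1%:R * h) Y_cadlag a_alpha alpha_beta beta_b _ _ drop_K) _.
  + by rewrite mulr_ge0 // ltW.
  + by rewrite ltr_pM2r // ltr_nat.
  apply: nneseries_indic_ge (ltW h0) _ => n nK i iN /=; rewrite ltNge.
  by apply/negP => /K_min; rewrite leqNgt (leq_trans iN nK).
- rewrite nneseries_indic_pinfty ?leey // => n i _ /=; rewrite ltNge.
  by apply/negP => drop; apply: no_drop; exists i.
Qed.

End levy_process.

Theorem lemma5 (R : realType) (d : measure_display) (T : measurableType d)
  (P : probability T R) (Y : R -> T -> R) (a alpha beta b : R) :
  is_levy P Y -> spectrally_positive P Y -> levy_tail_moment_finite P Y ->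
  a < alpha -> alpha <= beta -> beta < b ->
  (\int[P]_w tau_at_nstar (Y ^~ w) a alpha beta b alpha < +oo)%E.
Proof.
move=> hl [_ not_sub] _ a_alpha alpha_beta beta_b.
have [h [h0 drop]] := levy_large_drop P Y (a - b) hl not_sub.
apply: (le_lt_trans _ (integral_block_series_lt_pinfty P Y hl h0 drop)).
apply: ge0_le_integral_nonmeasurable => w; first exact: tau_at_nstar_ge0.
by apply: tau_at_nstar_le_block_series => //; case: hl.
Qed.
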